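(* Let $r\in\mathbb{R}$. For all integers $n,m,k \geq 0$ with $n \geq m+k$, \[ \binom{m+k}{m} S_{2,r}(n,m+k) = \sum_{l=m}^n \binom{n}{l} S_{2,r}(l,m)\, S_{2,r}(n-l,k). \]
   Context: For $r\in\mathbb{R}$ and integer $k\ge 0$, the extended Stirling numbers of the second kind $S_{2,r}(n,k)$ are defined by \[ \frac{1}{k!}(e^t-1+rt)^k = \sum_{n=k}^\infty S_{2,r}(n,k)\frac{t^n}{n!}, \] with $S_{2,r}(a,b)=0$ whenever $a<b$. *)

From mathcomp Require Import all_boot all_order all_algebra.
Set Implicit Arguments. Unset Strict Implicit. Unset Printing Implicit Defensive.
Import Order.TTheory GRing.Theory Num.Theory.
Local Open Scope ring_scope.

(* Truncation of the formal power series e^t - 1 to degree N: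
   \sum_{j=1}^{N} t^j / j!. *)
Definition expm1_trunc (R : realFieldType) (N : nat) : {poly R} :=
  \poly_(j < N.+1) (if j == 0%N then 0 else (j`!)%:R^-1).

(* Since e^t - 1 + r t has no constant term, the coefficient of t^n in
   its k-th power only depends on the terms of degree <= n, so using the
   truncation expm1_trunc n gives exactly the formal power series
   coefficient. In particular S2r r n k = 0 when n < k. *)
Definition S2r (R : realFieldType) (r : R) (n k : nat) : R :=
  (n`!)%:R / (k`!)%:R * ((expm1_trunc R n + r *: 'X) ^+ k)`_n.

From mathcomp Require Import all_boot all_order all_algebra.
From mathcomp Require Import zify ring.
Import GRing.Theory Num.Theory.
Local Open Scope ring_scope.

(* With f = e^t - 1 + r t, the identity is the coefficient of t^n / n! in
   (f^m / m!) * (f^k / k!) = 'C(m + k, m) * f^(m + k) / (m + k)!: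
   the product of two exponential generating functions has the binomial
   convolution of their coefficients as coefficients.  Since f has no
   constant term, the coefficients of degree <= n of its powers only see
   the truncation of f to degree n, and those of degree < m of f^m vanish,
   which lets the sum start at l = m. *)

Section PowerCoefficients.

Variable R : nzSemiRingType.

Lemma coef_expr_eq (p q : {poly R}) (i k : nat) :
  (forall j, (j <= i)%N -> p`_j = q`_j) -> (p ^+ k)`_i = (q ^+ k)`_i.
Proof.
elim: k i => [|k IHk] i eq_pq; first by rewrite !expr0.
rewrite !exprS !coefM; apply: eq_bigr => -[j /= lt_ji] _.
rewrite eq_pq // IHk // => j' le_j'; apply: eq_pq.
exact: leq_trans le_j' (leq_subr _ _).
Qed.

Lemma coef_expr_lt (p : {poly R}) (m l : nat) :
  p`_0 = 0 -> (l < m)%N -> (p ^+ m)`_l = 0.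
Proof.
move=> p0; elim: m l => [|m IHm] l //= lt_lm.
rewrite exprS coefM big1 // => -[[|j] /= lt_jl] _; first by rewrite p0 mul0r.
by rewrite IHm ?mulr0 //; lia.
Qed.

End PowerCoefficients.

Lemma egf_mul_weight (R : numFieldType) (n l m k : nat) (a b : R) :
  (l <= n)%N ->
  'C(m + k, m)%:R * ((n`!)%:R / ((m + k)`!)%:R * (a * b))
  = 'C(n, l)%:R * ((l`!)%:R / (m`!)%:R * a)
    * (((n - l)`!)%:R / (k`!)%:R * b).
Proof.
move=> le_ln.
have fact_n := bin_fact le_ln.
have fact_mk := bin_fact (leq_addr k m); rewrite addKn in fact_mk.
rewrite -fact_n -fact_mk !natrM.
have fact_neq0 j : (j`!)%:R != 0 :> R by rewrite pnatr_eq0 -lt0n fact_gt0.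
have bin_neq0 : 'C(m + k, m)%:R != 0 :> R.
  by rewrite pnatr_eq0 -lt0n bin_gt0 leq_addr.
by field; rewrite bin_neq0 !fact_neq0.
Qed.

Section ExtendedStirling.

Context {R : realFieldType} (r : R).

Definition expm1_rX (N : nat) : {poly R} := expm1_trunc R N + r *: 'X.

Lemma coef_expm1_rX (N j : nat) : (j <= N)%N ->
  (expm1_rX N)`_j = (if j == 0%N then 0 else (j`!)%:R^-1) + r * (j == 1%N)%:R.
Proof. by move=> le_jN; rewrite coefD coefZ coef_poly ltnS le_jN coefX. Qed.

Lemma coef0_expm1_rX (N : nat) : (expm1_rX N)`_0 = 0.
Proof. by rewrite coef_expm1_rX // mulr0 addr0. Qed.

Lemma S2rE (N : nat) {l k : nat} : (l <= N)%N ->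
  S2r r l k = (l`!)%:R / (k`!)%:R * ((expm1_rX N) ^+ k)`_l.
Proof.
move=> le_lN; congr (_ * _); apply: coef_expr_eq => j le_jl.
by rewrite -/(expm1_rX l) !coef_expm1_rX // (leq_trans le_jl).
Qed.

End ExtendedStirling.

Theorem theorem5 (R : realFieldType) (r : R) (n m k : nat) :
  (m + k <= n)%N ->
  ('C(m + k, m))%:R * S2r r n (m + k)
  = \sum_(m <= l < n.+1) ('C(n, l))%:R * S2r r l m * S2r r (n - l) k.
Proof.
move=> _.
rewrite big_geq_mkord big_mkcond /=.
rewrite (S2rE r n (leqnn n)) exprD coefM !mulr_sumr; apply: eq_bigr => -[l /=].
rewrite ltnS => le_ln _; case: leqP => [_ | lt_lm]; last first.
  by rewrite coef_expr_lt ?coef0_expm1_rX // mul0r !mulr0.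
rewrite (S2rE r n le_ln) (S2rE r n (leq_subr l n)).
exact: egf_mul_weight.
Qed.
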